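(* There is an absolute constant $c>0$ such that for every odd $n$, every mapping $\phi$ from ${\sf XOR}$ to ${\sf Majority}$ on $\{0,1\}^n$, and every $i\in[n]$, we have $\mathbb{E}_{x}[{\sf dist}(\phi(x),\phi(x+e_i))]\ge c\sqrt{n}$, where $x$ is uniform in $\{0,1\}^n$.
   Context: ${\sf XOR}(x)=\sum_i x_i \bmod 2$; ${\sf Majority}(x)=1$ iff $\sum_i x_i>n/2$. A mapping from $f$ to $g$ is a bijection $\phi$ of $\{0,1\}^n$ with $f(z)=g(\phi(z))$ for all $z$. $e_i$ is the $i$-th unit vector, addition mod 2, ${\sf dist}$ Hamming distance. *)

From mathcomp Require Import all_boot all_order all_fingroup all_algebra.
Set Implicit Arguments. Unset Strict Implicit. Unset Printing Implicit Defensive.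

Notation cube n := {ffun 'I_n -> bool}.

Definition wt n (x : cube n) : nat := #|[set j | x j]|.

Definition XOR n (x : cube n) : bool := odd (wt x).
Definition Majority n (x : cube n) : bool := n < 2 * wt x.

Definition flip n (x : cube n) (i : 'I_n) : cube n := [ffun j => x j (+) (j == i)].

Definition dist n (x y : cube n) : nat := #|[set j | x j != y j]|.

Definition is_mapping n (f g : cube n -> bool) (phi : {perm cube n}) : Prop :=
  forall z, f z = g (phi z).

Definition avg_stretch n (phi : {perm cube n}) (i : 'I_n) : rat :=
  ((\sum_(x : cube n) dist (phi x) (phi (flip x i)))%:R / (2 ^ n)%:R)%R.

(* Since x and x + e_i have different parity, phi maps every edge of direction i
   to a pair on opposite sides of the majority threshold, and such a pair is at
   Hamming distance at least the mean of the margins |2 wt - n| of its ends.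
   As phi and x |-> x + e_i are bijections, summing over x bounds the total
   stretch below by sum_y |2 wt y - n| = 2 n C(2m, m), where n = 2m + 1; the
   estimate C(2m, m)^2 (4m + 1) >= 16^m then gives 2^n sqrt(n) / 2. *)
From mathcomp Require Import all_boot all_order all_fingroup all_algebra.
From mathcomp Require Import zify ring lra.
Import GRing.Theory Num.Theory.

Set Implicit Arguments. Unset Strict Implicit. Unset Printing Implicit Defensive.

(* |2k - n|, written with truncated subtractions *)
Definition margin (n k : nat) : nat := (2 * k - n) + (n - 2 * k).

(* |2k - n| C(n, k) = n |C(n-1, k-1) - C(n-1, k)|, so the partial sums
   telescope, up to the central term and back down from it. *)
Section MarginBinomialSum.

Variable m : nat.

Lemma margin_bin_step_low j : j < m ->
  'C(m.*2.+1, j.+1) * margin m.*2.+1 j.+1 + m.*2.+1 * 'C(m.*2, j)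
  = m.*2.+1 * 'C(m.*2, j.+1).
Proof.
move=> lt_jm; have := mul_bin_diag m.*2.+1 j; have := mul_bin_down m.*2.+1 j.+1.
rewrite /margin /=; nia.
Qed.

Lemma margin_bin_step_high j : m <= j -> j < m.*2.+1 ->
  'C(m.*2.+1, j.+1) * margin m.*2.+1 j.+1 + m.*2.+1 * 'C(m.*2, j.+1)
  = m.*2.+1 * 'C(m.*2, j).
Proof.
move=> le_mj lt_jn; have diag := mul_bin_diag m.*2.+1 j.
have down := mul_bin_down m.*2.+1 j.+1; rewrite /= in diag down.
rewrite /margin (_ : 2 * j.+1 - m.*2.+1 = j.+1 - (m.*2.+1 - j.+1)); last by lia.
rewrite (_ : m.*2.+1 - 2 * j.+1 = 0); last by lia.
rewrite addn0 down diag mulnBr [X in _ = X]mulnC [_ * 'C(_, _)]mulnC subnK //.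
by rewrite leq_mul2l; lia.
Qed.

Lemma sum_margin_bin_low j : j <= m ->
  \sum_(k < j.+1) 'C(m.*2.+1, k) * margin m.*2.+1 k = m.*2.+1 * 'C(m.*2, j).
Proof.
elim: j => [|j IHj] le_jm; first by rewrite big_ord_recr big_ord0 /= /margin !bin0; lia.
by rewrite big_ord_recr /= (IHj (ltnW le_jm)) addnC margin_bin_step_low.
Qed.

Lemma sum_margin_bin_high t : m + t <= m.*2.+1 ->
  \sum_(k < (m + t).+1) 'C(m.*2.+1, k) * margin m.*2.+1 k
    + m.*2.+1 * 'C(m.*2, m + t)
  = 2 * (m.*2.+1 * 'C(m.*2, m)).
Proof.
elim: t => [|t IHt] le_tn; first by rewrite addn0 sum_margin_bin_low //; lia.
rewrite addnS big_ord_recr /= -addnA margin_bin_step_high ?leq_addr //; last by lia.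
by apply: IHt; lia.
Qed.

Lemma sum_margin_bin :
  \sum_(k < m.*2.+2) 'C(m.*2.+1, k) * margin m.*2.+1 k
  = 2 * (m.*2.+1 * 'C(m.*2, m)).
Proof.
have := @sum_margin_bin_high m.+1; rewrite addnS -addnn bin_small; last by lia.
by rewrite muln0 addn0 => ->; lia.
Qed.

End MarginBinomialSum.

Lemma central_bin_sqr_lower_bound m : 16 ^ m <= 'C(m.*2, m) ^ 2 * (4 * m + 1).
Proof.
elim: m => [|m IHm] //.
have rec : m.+1 * 'C(m.*2.+2, m.+1) = 2 * (m.*2.+1 * 'C(m.*2, m)).
  rewrite binS mulnDr -mul_bin_diag.
  by have := mul_bin_down m.*2.+1 m; rewrite /=; nia.
set C := 'C(m.*2, m) in IHm rec *; set D := 'C(m.*2.+2, m.+1) in rec *.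
rewrite -(@leq_pmul2r (m.+1 ^ 2)) ?expn_gt0 //.
have -> : D ^ 2 * (4 * m.+1 + 1) * m.+1 ^ 2 = (m.+1 * D) ^ 2 * (4 * m + 5).
  by rewrite expnMn; ring.
rewrite rec expnS -mulnA.
apply: (@leq_trans (16 * (C ^ 2 * (4 * m + 1)) * m.+1 ^ 2)).
  by rewrite -mulnA; apply: leq_mul => //; apply: leq_mul.
rewrite (_ : 16 * _ * _ = C ^ 2 * (16 * (4 * m + 1) * m.+1 ^ 2)); last by ring.
rewrite (_ : (2 * _) ^ 2 * _ = C ^ 2 * (4 * m.*2.+1 ^ 2 * (4 * m + 5))).
  by rewrite leq_mul2l -!mul2n; apply/orP; right; nia.
by rewrite !expnMn; ring.
Qed.

Section Cube.

Variable n : nat.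
Implicit Types (x y a b : cube n) (i : 'I_n).

Lemma wt_le_dim x : wt x <= n.
Proof. by rewrite /wt; apply: leq_trans (max_card _) _; rewrite card_ord. Qed.

Lemma card_wt k : #|[pred y : cube n | wt y == k]| = 'C(n, k).
Proof.
pose ofset (A : {set 'I_n}) : cube n := [ffun j => j \in A].
have ofset_inj : injective ofset.
  by move=> A B /ffunP eqAB; apply/setP => j; have := eqAB j; rewrite !ffunE.
have wt_ofset A : wt (ofset A) = #|A|.
  by apply: eq_card => j; rewrite inE ffunE.
rewrite -[n in 'C(n, _)]card_ord -card_draws -(card_imset _ ofset_inj).
apply: eq_card => y; rewrite !inE; apply/idP/imsetP => [wt_y|[A + ->]].
  exists [set j | y j]; first by rewrite inE.
  by apply/ffunP => j; rewrite ffunE inE.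
by rewrite inE wt_ofset.
Qed.

Lemma sum_wt (F : nat -> nat) :
  \sum_(y : cube n) F (wt y) = \sum_(k < n.+1) 'C(n, k) * F k.
Proof.
rewrite (partition_big (fun y => inord (wt y) : 'I_n.+1) xpredT) //=.
apply: eq_bigr => k _; rewrite -card_wt -sum1_card big_distrl /=.
apply: eq_big => [y|y /eqP <-]; last by rewrite inordK ?ltnS ?wt_le_dim // mul1n.
apply/eqP/eqP => [<-|->]; first by rewrite inordK // ltnS wt_le_dim.
by apply: val_inj; rewrite /= inordK // ltnS wt_le_dim.
Qed.

Lemma wt_le_add_dist a b : wt a <= wt b + dist a b.
Proof.
apply: leq_trans (leq_card_setU _ _); apply: subset_leq_card.
by apply/subsetP => j; rewrite !inE; case: (a j); case: (b j).
Qed.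

Lemma distC a b : dist a b = dist b a.
Proof. by apply: eq_card => j; rewrite !inE eq_sym. Qed.

Lemma XOR_flip x i : XOR (flip x i) = ~~ XOR x.
Proof.
rewrite /XOR /wt.
have -> : [set j | flip x i j] =
          if x i then [set j | x j] :\ i else i |: [set j | x j].
  apply/setP => j; rewrite !inE ffunE.
  case: (eqVneq j i) => [->|neq_ji]; first by case: (x i); rewrite /= ?inE ?eqxx.
  by case: (x i); rewrite /= ?inE (negbTE neq_ji) ?addbF.
case: ifP => xi.
  by rewrite (cardsD1 i [set j | x j]) inE xi /= negbK.
by rewrite (cardsU1 i [set j | x j]) inE xi.
Qed.

Lemma flip_inj i : injective (fun x : cube n => flip x i).
Proof.
move=> x y /ffunP eq_xy; apply/ffunP => j; have := eq_xy j.
by rewrite !ffunE; case: (x j); case: (y j); case: (j == i).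
Qed.

Lemma margin_le_dist a b : Majority a = ~~ Majority b ->
  margin n (wt a) + margin n (wt b) <= 2 * dist a b.
Proof.
have := wt_le_add_dist a b; have := wt_le_add_dist b a.
rewrite /Majority /margin distC.
by case: (ltnP n (2 * wt b)); case: (ltnP n (2 * wt a)) => //; lia.
Qed.

Lemma sum_margin_le_stretch (phi : {perm cube n}) i :
  is_mapping (@XOR n) (@Majority n) phi ->
  \sum_(y : cube n) margin n (wt y)
    <= \sum_(x : cube n) dist (phi x) (phi (flip x i)).
Proof.
move=> phi_map.
pose sum_margin := \sum_(y : cube n) margin n (wt y).
have sum_phi : \sum_(x : cube n) margin n (wt (phi x)) = sum_margin.
  by rewrite [RHS](reindex_inj (@perm_inj _ phi)).
have sum_phi_flip : \sum_(x : cube n) margin n (wt (phi (flip x i))) = sum_margin.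
  by rewrite -sum_phi [RHS](reindex_inj (@flip_inj i)).
have : \sum_(x : cube n) (margin n (wt (phi x)) + margin n (wt (phi (flip x i))))
         <= \sum_(x : cube n) 2 * dist (phi x) (phi (flip x i)).
  by apply: leq_sum => x _; apply: margin_le_dist; rewrite -!phi_map XOR_flip negbK.
by rewrite big_split /= sum_phi sum_phi_flip -big_distrr /= addnn -mul2n leq_pmul2l.
Qed.

End Cube.

Lemma stretch_sum_sqr_lower_bound n (phi : {perm cube n}) i : odd n ->
  is_mapping (@XOR n) (@Majority n) phi ->
  n * (2 ^ n) ^ 2 <= 4 * (\sum_(x : cube n) dist (phi x) (phi (flip x i))) ^ 2.
Proof.
move=> odd_n phi_map.
set S := \sum_(x : cube n) _; set m := n./2.
have n_eq : n = m.*2.+1 by rewrite -[LHS]odd_double_half odd_n.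
have le_S : 2 * (n * 'C(m.*2, m)) <= S.
  rewrite {1}n_eq -sum_margin_bin -n_eq -(@sum_wt n (margin n)).
  exact: sum_margin_le_stretch.
have bin_bound := central_bin_sqr_lower_bound m.
set C := 'C(m.*2, m) in le_S bin_bound.
set P := 4 ^ m.
have -> : 2 ^ n = 2 * P by rewrite n_eq expnS -mul2n expnM.
rewrite (_ : 16 ^ m = P ^ 2) in bin_bound; last by rewrite -expnM mulnC expnM.
apply: (@leq_trans (4 * (2 * (n * C)) ^ 2)); last by rewrite leq_mul2l leq_exp2r.
rewrite (_ : n * _ = 4 * n * P ^ 2); last by ring.
rewrite (_ : 4 * (2 * _) ^ 2 = 4 * n * (C ^ 2 * (4 * n))); last by ring.
rewrite leq_mul2l; apply/orP; right; apply: leq_trans bin_bound _.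
by rewrite leq_mul2l; apply/orP; right; lia.
Qed.

Local Open Scope ring_scope.

Theorem mainTheorem6 :
  exists c : rat, 0 < c /\
    forall (n : nat), odd n ->
    forall (phi : {perm cube n}), is_mapping (@XOR n) (@Majority n) phi ->
    forall (i : 'I_n), c ^+ 2 * n%:R <= avg_stretch phi i ^+ 2.
Proof.
exists (1 / 2); split=> // n odd_n phi phi_map i.
have := stretch_sum_sqr_lower_bound i odd_n phi_map.
rewrite -(ler_nat rat) !natrM !natrX /avg_stretch natrX.
set S := (\sum_(x : cube n) _)%:R; set P := 2%:R ^+ n => le_S.
rewrite [X in _ <= X]expr_div_n ler_pdivlMr ?exprn_gt0 // expr_div_n expr1n.
rewrite !expr2 in le_S *; lra.
Qed.
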